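(* Let $n\ge 2$, let $K$ be a field, and let $I(2,n)\subset K[x_{ij}:1\le i,j\le n]$ be the ideal generated by the $2$-minors of the generic $n\times n$ matrix $X=(x_{ij})$. Let $\succ$ be a reverse lexicographic term order induced by a total order of the variables in which $x_{11}\prec x_{22}\prec\cdots\prec x_{nn}$, every diagonal variable $x_{ii}$ is smaller than every off-diagonal variable $x_{ab}$ ($a\ne b$), and the off-diagonal variables are ordered so that $x_{ij}\succ x_{hk}$ whenever $|i-j|<|h-k|$. Let $H(2,n)$ be the monomial ideal generated by the following monomials, for all $i<h$ and $j<k$: (1) $x_{ik}x_{hj}$ whenever $i=j$ or $h=k$; (2) $x_{ij}x_{hk}$ whenever $i\neq j$ and $h\neq k$. Then $\operatorname{in}_\succ(I(2,n))=H(2,n)$.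
   Context: $\operatorname{in}_\succ(I)$ denotes the initial ideal of $I$ with respect to the term order $\succ$. *)

From HB Require Import structures.
From mathcomp Require Import all_boot all_order all_algebra.
From mathcomp Require Import mpoly.
Set Implicit Arguments. Unset Strict Implicit. Unset Printing Implicit Defensive.
Import Order.TTheory GRing.Theory.
Local Open Scope ring_scope.

Definition genvar (K : fieldType) (n : nat) (i j : 'I_n) : {mpoly K[n * n]} :=
  'X_(mxvec_index i j).

Definition ideal_gen (R : comNzRingType) (N : nat) (P : {mpoly R[N]} -> Prop)
    (p : {mpoly R[N]}) : Prop :=
  exists (gs cs : seq {mpoly R[N]}),
    [/\ size cs = size gs, (forall g, g \in gs -> P g) &
        p = \sum_(t < size gs) cs`_t * gs`_t].

(* The variable order is given by an injective rank function rk : 'I_N -> nat,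
   (variable v is larger than w iff rk v > rk w).
   revlex_lt rk m1 m2 means m1 < m2 (strictly) in the term order:
   deg m1 < deg m2, or the degrees agree and, at the smallest variable v
   (w.r.t. rk) in which the exponents differ, m1 has the larger exponent. *)
Definition revlex_lt (N : nat) (rk : 'I_N -> nat) (m1 m2 : 'X_{1..N}) : Prop :=
  (mdeg m1 < mdeg m2)%N \/
  (mdeg m1 = mdeg m2 /\
   exists v : 'I_N, (m2 v < m1 v)%N /\
     forall w : 'I_N, (rk w < rk v)%N -> m1 w = m2 w).

Definition is_lead_mon (R : comNzRingType) (N : nat) (rk : 'I_N -> nat)
    (f : {mpoly R[N]}) (m : 'X_{1..N}) : Prop :=
  m \in msupp f /\ forall m', m' \in msupp f -> m' != m -> revlex_lt rk m' m.

Definition initial_ideal (R : comNzRingType) (N : nat) (rk : 'I_N -> nat)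
    (I : {mpoly R[N]} -> Prop) : {mpoly R[N]} -> Prop :=
  ideal_gen (fun g => exists f m, [/\ I f, is_lead_mon rk f m & g = 'X_[m]]).

Definition minors2 (K : fieldType) (n : nat) (g : {mpoly K[n * n]}) : Prop :=
  exists i h j k : 'I_n, [/\ (i < h)%N, (j < k)%N &
    g = genvar K i j * genvar K h k - genvar K i k * genvar K h j].

Definition I2 (K : fieldType) (n : nat) := ideal_gen (@minors2 K n).

Definition Hgens (K : fieldType) (n : nat) (g : {mpoly K[n * n]}) : Prop :=
  exists i h j k : 'I_n, [/\ (i < h)%N, (j < k)%N &
    ((i = j \/ h = k) /\ g = genvar K i k * genvar K h j) \/
    ((i <> j /\ h <> k) /\ g = genvar K i j * genvar K h k)].

Definition H2 (K : fieldType) (n : nat) := ideal_gen (@Hgens K n).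

Definition vrank (n : nat) (rk : 'I_(n * n) -> nat) (i j : 'I_n) : nat :=
  rk (mxvec_index i j).

Definition idist (n : nat) (i j : 'I_n) : nat := ((i - j) + (j - i))%N.

(* A generator of H(2,n)
   is the product of two entries of a 2x2 submatrix; the constraints on the
   variable order put the smallest variable of that minor in the other term,
   so the generator is the leading monomial of the minor (up to sign).
   Conversely, grade K[x] by row and column sums (the bidegree).  Each minor is
   a difference of two monomials of the same bidegree, so on I(2,n) the sum of
   the coefficients in any bidegree vanishes.  Let m be the leading monomial of
   f in I(2,n) and u another monomial of f of the same bidegree, so u < m.  At
   the smallest variable x_pq where they differ u has the larger exponent, and
   balancing row p and column q yields x_pb and x_aq (a <> p, b <> q) dividing
   m, both of rank at least that of x_pq, and such a pair always forms a
   generator of H(2,n).  If no such u exists, the coefficient of m alone is a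
   vanishing sum, which is absurd. *)

From HB Require Import structures.
From mathcomp Require Import all_boot all_order all_algebra.
From mathcomp Require Import mpoly.
From mathcomp Require Import zify.
Set Implicit Arguments. Unset Strict Implicit. Unset Printing Implicit Defensive.
Import Order.TTheory GRing.Theory.
Local Open Scope ring_scope.

Section IdealGen.
Variables (R : comNzRingType) (N : nat).
Implicit Types (P Q : {mpoly R[N]} -> Prop) (p g c : {mpoly R[N]}).

Inductive lincomb P : {mpoly R[N]} -> Prop :=
| lincomb0 : lincomb P 0
| lincombS c g p : P g -> lincomb P p -> lincomb P (c * g + p).

Lemma ideal_genP P p : ideal_gen P p <-> lincomb P p.
Proof.
split.
  case=> gs [cs [+ + ->]].
  elim: gs cs => [|g gs IH] [|c cs] //= size_cs Pgs.
    by rewrite big_ord0; constructor.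
  rewrite big_ord_recl; constructor; first by apply: Pgs; rewrite inE eqxx.
  apply: IH; first by case: size_cs.
  by move=> g' gs_g'; apply: Pgs; rewrite inE gs_g' orbT.
elim=> [|c g q Pg _ [gs [cs [size_cs Pgs ->]]]].
  by exists [::], [::]; split => //; rewrite big_ord0.
exists (g :: gs), (c :: cs); split => /=; first by rewrite size_cs.
  by move=> g'; rewrite inE => /orP[/eqP ->|/Pgs].
by rewrite big_ord_recl.
Qed.

Lemma lincombD P p q : lincomb P p -> lincomb P q -> lincomb P (p + q).
Proof.
elim=> [|c g p' Pg _ IH] Pq; first by rewrite add0r.
by rewrite -addrA; constructor; last exact: IH.
Qed.

Lemma lincombMl P c p : lincomb P p -> lincomb P (c * p).
Proof.
elim=> [|c' g p' Pg _ IH]; first by rewrite mulr0; constructor.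
by rewrite mulrDr mulrA; constructor.
Qed.

Lemma ideal_gen_trans P Q p :
  (forall g, P g -> ideal_gen Q g) -> ideal_gen P p -> ideal_gen Q p.
Proof.
move=> PQ /ideal_genP; rewrite ideal_genP; elim=> [|c g q Pg _ IH].
  exact: lincomb0.
by apply: lincombD => //; apply/lincombMl/ideal_genP/PQ.
Qed.

Lemma ideal_gen_mono P Q p :
  (forall g, P g -> Q g) -> ideal_gen P p -> ideal_gen Q p.
Proof.
by move=> PQ [gs [cs [size_cs Pgs ->]]]; exists gs, cs; split=> // g /Pgs; apply: PQ.
Qed.

Lemma ideal_gen_mull P c g : P g -> ideal_gen P (c * g).
Proof.
by move=> Pg; apply/ideal_genP; rewrite -[_ * _]addr0; exact: lincombS Pg (lincomb0 _).
Qed.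

Lemma ideal_genX_le P (A m : 'X_{1..N}) :
  (A <= m)%MM -> P 'X_[A] -> ideal_gen P 'X_[m].
Proof. by move=> /submK <-; rewrite mpolyXD; apply: ideal_gen_mull. Qed.

End IdealGen.

Section CoefSum.
Variables (R : comNzRingType) (N : nat) (P : pred 'X_{1..N}).
Implicit Types (f g c : {mpoly R[N]}).

Definition coef_sum f : R := \sum_(u <- msupp f | P u) f@_u.

Lemma coef_sumE f s : uniq s -> {subset msupp f <= s} ->
  coef_sum f = \sum_(u <- s | P u) f@_u.
Proof.
move=> s_uniq f_s; rewrite /coef_sum [RHS](bigID (mem (msupp f))) /=.
rewrite [X in _ + X]big1 ?addr0 => [|u /andP[_]]; last exact: memN_msupp_eq0.
rewrite -big_filter -[RHS]big_filter; apply: perm_big; apply: uniq_perm.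
- exact/filter_uniq/msupp_uniq.
- exact: filter_uniq.
move=> u; rewrite !mem_filter; case f_u: (u \in msupp f).
  by rewrite f_s ?andbT.
by rewrite !andbF.
Qed.

Lemma coef_sumZ a f : coef_sum (a *: f) = a * coef_sum f.
Proof.
rewrite (@coef_sumE (a *: f) (msupp f)) ?msupp_uniq //; last exact: msuppZ_le.
by rewrite /coef_sum mulr_sumr; apply: eq_bigr => u _; rewrite mcoeffZ.
Qed.

Lemma coef_sumD f g : coef_sum (f + g) = coef_sum f + coef_sum g.
Proof.
pose s := undup (msupp f ++ msupp g).
have s_uniq : uniq s by rewrite undup_uniq.
rewrite (@coef_sumE (f + g) s) ?(@coef_sumE f s) ?(@coef_sumE g s) //.
- by rewrite -big_split; apply: eq_bigr => u _; rewrite mcoeffD.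
- by move=> u g_u; rewrite mem_undup mem_cat g_u orbT.
- by move=> u f_u; rewrite mem_undup mem_cat f_u.
by move=> u /msuppD_le; rewrite mem_undup.
Qed.

HB.instance Definition _ :=
  GRing.isSemilinear.Build R {mpoly R[N]} R _ coef_sum (coef_sumZ, coef_sumD).

Lemma coef_sumX m : coef_sum 'X_[m] = (P m)%:R.
Proof. by rewrite /coef_sum msuppX big_mkcond big_seq1 mcoeffX eqxx; case: (P m). Qed.

Lemma coef_sum_binomial c (A B : 'X_{1..N}) :
  (forall t, P (t + A)%MM = P (t + B)%MM) ->
  coef_sum (c * ('X_[A] - 'X_[B])) = 0.
Proof.
move=> PAB; rewrite {1}(mpolyE c) mulr_suml raddf_sum /= big1 // => t _.
by rewrite -scalerAl coef_sumZ mulrBr -!mpolyXD raddfB /= !coef_sumX PAB subrr mulr0.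
Qed.

End CoefSum.

Section Revlex.
Variables (R : comNzRingType) (N : nat) (rk : 'I_N -> nat).

Lemma revlex_lt_irr m : ~ revlex_lt rk m m.
Proof. by case=> [|[_ [v [+ _]]]]; rewrite ltnn. Qed.

Lemma revlex_lt_quadratic (a b c d : 'I_N) :
  (rk c < rk a)%N -> (rk c < rk b)%N -> (rk c <= rk d)%N ->
  revlex_lt rk (U_(c) + U_(d))%MM (U_(a) + U_(b))%MM.
Proof.
move=> ca cb cd; right; split; first by rewrite !mdegD !mdeg1.
have rk_neq v w : (rk v < rk w)%N -> (w == v) = false.
  by move=> vw; apply/eqP => wv; rewrite wv ltnn in vw.
exists c; split.
  by rewrite !mnmDE !mnm1E (rk_neq _ _ ca) (rk_neq _ _ cb) eqxx.
move=> w wc; have w_neq x : (rk c <= rk x)%N -> (x == w) = false.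
  by move=> cx; apply: rk_neq; apply: leq_trans cx.
by rewrite !mnmDE !mnm1E !w_neq ?(ltnW ca) ?(ltnW cb).
Qed.

Lemma is_lead_mon_binomial (A B : 'X_{1..N}) : revlex_lt rk B A ->
  is_lead_mon rk ('X_[A] - 'X_[B] : {mpoly R[N]}) A.
Proof.
move=> BA; have neqBA : B != A by apply: contraPneq BA => ->; apply: revlex_lt_irr.
split=> [|m]; rewrite mcoeff_msupp mcoeffB !mcoeffX.
  by rewrite eqxx (negbTE neqBA) subr0 mulr1n oner_eq0.
move=> + mA; rewrite eq_sym in mA; rewrite (negbTE mA) sub0r oppr_eq0.
by case: (eqVneq B m) => [<- //|_]; rewrite mulr0n eqxx.
Qed.

End Revlex.

Lemma sum_eq_exists_lt n (F G : 'I_n -> nat) q :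
  (\sum_i F i = \sum_i G i)%N -> (G q < F q)%N -> exists2 b, b != q & (F b < G b)%N.
Proof.
move=> eq_sum GFq; have [/existsP[b /andP[bq]]|/existsPn FG] :=
  boolP [exists b, (b != q) && (F b < G b)%N]; first by exists b.
suff : (\sum_i G i < \sum_i F i)%N by rewrite eq_sum ltnn.
rewrite [X in (X < _)%N](bigD1 q) // [X in (_ < X)%N](bigD1 q) //=.
rewrite -addSn leq_add // leq_sum // => i iq.
by rewrite leqNgt; apply: contraNN (FG i) => ->; rewrite iq.
Qed.

Lemma idist_minor {n} {i h j k : 'I_n} : (i < h)%N -> (j < k)%N ->
  ((idist i j < idist i k)%N \/ (idist i j < idist h j)%N) /\
  ((idist h k < idist i k)%N \/ (idist h k < idist h j)%N).
Proof. rewrite /idist; lia. Qed.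

Section Bidegree.
Variable n : nat.
Local Notation x := (@mxvec_index n n).

Lemma mxvec_index_eq i j i' j' : (x i j == x i' j') = (i == i') && (j == j').
Proof.
apply/eqP/andP => [/cast_ord_inj/enum_rank_inj[-> ->] //|[/eqP-> /eqP->] //].
Qed.

Definition rowsum (m : 'X_{1..n * n}) (i : 'I_n) : nat := (\sum_j m (x i j))%N.
Definition colsum (m : 'X_{1..n * n}) (j : 'I_n) : nat := (\sum_i m (x i j))%N.
Definition bidegree (m : 'X_{1..n * n}) :=
  ([ffun i => rowsum m i], [ffun j => colsum m j]).

Lemma rowsumD m1 m2 i : rowsum (m1 + m2)%MM i = (rowsum m1 i + rowsum m2 i)%N.
Proof. by rewrite /rowsum -big_split; apply: eq_bigr => j _; rewrite mnmDE. Qed.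

Lemma colsumD m1 m2 j : colsum (m1 + m2)%MM j = (colsum m1 j + colsum m2 j)%N.
Proof. by rewrite /colsum -big_split; apply: eq_bigr => i _; rewrite mnmDE. Qed.

Lemma rowsum1 i j i' : rowsum U_(x i j)%MM i' = (i == i') :> nat.
Proof.
rewrite /rowsum (bigD1 j) //= mnm1E mxvec_index_eq eqxx andbT big1 ?addn0 //.
by move=> j' j'j; rewrite mnm1E mxvec_index_eq (eq_sym j) (negbTE j'j) andbF.
Qed.

Lemma colsum1 i j j' : colsum U_(x i j)%MM j' = (j == j') :> nat.
Proof.
rewrite /colsum (bigD1 i) //= mnm1E mxvec_index_eq eqxx big1 ?addn0 //.
by move=> i' i'i; rewrite mnm1E mxvec_index_eq (eq_sym i) (negbTE i'i).
Qed.

Lemma bidegree_minor t (i h j k : 'I_n) :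
  bidegree (t + (U_(x i j) + U_(x h k)))%MM =
  bidegree (t + (U_(x i k) + U_(x h j)))%MM.
Proof.
congr pair; apply/ffunP => l; rewrite !ffunE.
  by rewrite !rowsumD !rowsum1.
by rewrite !colsumD !colsum1 [((k == l) + _)%N]addnC.
Qed.

Lemma mdeg_rowsum m : mdeg m = (\sum_i rowsum m i)%N.
Proof.
rewrite mdegE (reindex _ (curry_mxvec_bij n n)) /= /rowsum pair_big /=.
by apply: eq_bigr => -[i j].
Qed.

Lemma bidegree_mdeg m1 m2 : bidegree m1 = bidegree m2 -> mdeg m1 = mdeg m2.
Proof.
case=> /ffunP eq_rows _; rewrite !mdeg_rowsum; apply: eq_bigr => i _.
by have := eq_rows i; rewrite !ffunE.
Qed.

End Bidegree.

Lemma mnm_le_U2 N (v w : 'I_N) (m : 'X_{1..N}) :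
  v != w -> (0 < m v)%N -> (0 < m w)%N -> (U_(v) + U_(w) <= m)%MM.
Proof.
move=> vw mv mw; apply/mnm_lepP => l; rewrite mnmDE !mnm1E.
by case: (eqVneq v l) => [<-|_]; [rewrite eq_sym (negbTE vw) | case: eqVneq => [<-|]].
Qed.

Lemma ord_lt_neq {n} {i j : 'I_n} : (i < j)%N -> i <> j /\ j <> i.
Proof. by move=> ij; split=> eq_ij; rewrite eq_ij ltnn in ij. Qed.

Section Minors.
Variables (K : fieldType) (n : nat).
Local Notation x := (@mxvec_index n n).
Local Notation genvar := (genvar K).

Lemma genvarM i j h k : genvar i j * genvar h k = 'X_[U_(x i j) + U_(x h k)].
Proof. by rewrite mpolyXD. Qed.

Lemma I2_minor c (i h j k : 'I_n) : (i < h)%N -> (j < k)%N ->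
  I2 (c * (genvar i j * genvar h k - genvar i k * genvar h j)).
Proof. by move=> ih jk; apply: ideal_gen_mull; exists i, h, j, k. Qed.

Lemma coef_sum_I2 d (f : {mpoly K[n * n]}) :
  I2 f -> coef_sum [pred u : 'X_{1..n * n} | bidegree u == d] f = 0.
Proof.
case=> gs [cs [_ gs_minors ->]]; rewrite raddf_sum /= big1 // => t _.
have [i [h [j [k [_ _ ->]]]]] := gs_minors _ (mem_nth 0 (ltn_ord t)).
by rewrite !genvarM; apply: coef_sum_binomial => s; rewrite /= bidegree_minor.
Qed.

Lemma Hgens_minor_antidiag (i h j k : 'I_n) : (i < h)%N -> (j < k)%N ->
  i = j \/ h = k -> Hgens (genvar i k * genvar h j).
Proof. by move=> *; exists i, h, j, k; split => //; left. Qed.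

Lemma Hgens_minor_diag (i h j k : 'I_n) : (i < h)%N -> (j < k)%N ->
  i <> j -> h <> k -> Hgens (genvar i j * genvar h k).
Proof. by move=> *; exists i, h, j, k; split => //; right. Qed.

Variable rk : 'I_(n * n) -> nat.
Hypotheses
  (rk_diag : forall i i' : 'I_n, (i < i')%N -> (vrank rk i i < vrank rk i' i')%N)
  (rk_diag_off : forall i a b : 'I_n, a <> b -> (vrank rk i i < vrank rk a b)%N)
  (rk_off : forall i j h k : 'I_n, i <> j -> h <> k ->
              (idist i j < idist h k)%N -> (vrank rk h k < vrank rk i j)%N).

Lemma vrank_lt (a b c d : 'I_n) : a <> b -> c = d \/ (idist a b < idist c d)%N ->
  (vrank rk c d < vrank rk a b)%N.
Proof.
move=> ab; have [<-{d} _|/eqP cd [//|]] := eqVneq c d; first exact: rk_diag_off.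
exact: rk_off.
Qed.

Lemma vrank_diag_le (i h k : 'I_n) : (i <= h)%N -> (vrank rk i i <= vrank rk h k)%N.
Proof.
have [<-{k}|/eqP hk] := eqVneq h k; last by move=> _; exact/ltnW/rk_diag_off.
by rewrite leq_eqVlt => /orP[/eqP/val_inj <- //|/rk_diag/ltnW].
Qed.

Lemma revlex_minor_antidiag (i h j k : 'I_n) : (i < h)%N -> (j < k)%N ->
  i = j \/ h = k ->
  revlex_lt rk (U_(x i j) + U_(x h k))%MM (U_(x i k) + U_(x h j))%MM.
Proof.
move=> ih jk; have [ih_ne hi_ne] := ord_lt_neq ih; have [jk_ne kj_ne] := ord_lt_neq jk.
have [ij _|/eqP ij [//|hk]] := eqVneq i j; [subst j | subst k].
  apply: revlex_lt_quadratic; [exact: rk_diag_off | exact: rk_diag_off |].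
  exact/vrank_diag_le/ltnW.
rewrite addmC; apply: revlex_lt_quadratic.
- exact: rk_diag_off.
- exact: rk_diag_off.
- exact/ltnW/rk_diag_off.
Qed.

Lemma revlex_minor_diag (i h j k : 'I_n) : (i < h)%N -> (j < k)%N ->
  i <> j -> h <> k ->
  revlex_lt rk (U_(x i k) + U_(x h j))%MM (U_(x i j) + U_(x h k))%MM.
Proof.
move=> ih jk ij hk; have [dij dhk] := idist_minor ih jk.
have lt_ij : (vrank rk i k < vrank rk i j)%N \/ (vrank rk h j < vrank rk i j)%N.
  by case: dij => d; [left | right]; apply: vrank_lt => //; right.
have lt_hk : (vrank rk i k < vrank rk h k)%N \/ (vrank rk h j < vrank rk h k)%N.
  by case: dhk => d; [left | right]; apply: vrank_lt => //; right.
rewrite /vrank in lt_ij lt_hk; case: (leqP (rk (x i k)) (rk (x h j))) => le_ik_hj.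
  by apply: revlex_lt_quadratic => //; lia.
by rewrite addmC; apply: revlex_lt_quadratic; lia.
Qed.

Lemma Hgens_initial (g : {mpoly K[n * n]}) :
  Hgens g -> exists f m, [/\ @I2 K n f, is_lead_mon rk f m & g = 'X_[m]].
Proof.
case=> [i [h [j [k [ih jk [[diag ->]|[[ij hk] ->]]]]]]].
  exists (- (genvar i j * genvar h k - genvar i k * genvar h j)).
  exists (U_(x i k) + U_(x h j))%MM; split; last exact: genvarM.
    by rewrite -mulN1r; apply: I2_minor.
  by rewrite opprB !genvarM; apply/is_lead_mon_binomial/revlex_minor_antidiag.
exists (genvar i j * genvar h k - genvar i k * genvar h j).
exists (U_(x i j) + U_(x h k))%MM; split; last exact: genvarM.
  by rewrite -[_ - _]mul1r; apply: I2_minor.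
by rewrite !genvarM; apply/is_lead_mon_binomial/revlex_minor_diag.
Qed.

Lemma Hgens_exchange (p q a b : 'I_n) : a <> p -> b <> q ->
  (vrank rk p q <= vrank rk p b)%N -> (vrank rk p q <= vrank rk a q)%N ->
  Hgens (genvar p b * genvar a q).
Proof.
move=> ap bq pq_pb pq_aq; have pa := nesym ap; have qb := nesym bq.
have [pq|/eqP pq] := eqVneq p q.
  subst q; case: (ltngtP a p) => [a_p|p_a|/val_inj/ap[]];
    case: (ltngtP b p) => [b_p|p_b|/val_inj/bq[]].
  - by rewrite mulrC; apply: Hgens_minor_antidiag => //; right.
  - by rewrite mulrC; apply: Hgens_minor_diag.
  - exact: Hgens_minor_diag.
  - by apply: Hgens_minor_antidiag => //; left.
have bp : b <> p by move=> b_p; move: pq_pb; rewrite b_p leqNgt vrank_lt //; left.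
have aq : a <> q by move=> a_q; move: pq_aq; rewrite a_q leqNgt vrank_lt //; left.
have far_b : ~ (idist p q < idist p b)%N.
  by move=> d; move: pq_pb; rewrite leqNgt vrank_lt //; right.
have far_a : ~ (idist p q < idist a q)%N.
  by move=> d; move: pq_aq; rewrite leqNgt vrank_lt //; right.
case: (ltngtP p a) => [p_a|a_p|/val_inj/pa[]];
  case: (ltngtP b q) => [b_q|q_b|/val_inj/bq[]].
- by apply: Hgens_minor_diag => //; apply: nesym.
- by case: (idist_minor p_a q_b).1.
- by case: (idist_minor a_p b_q).2.
- by rewrite mulrC; apply: Hgens_minor_diag => //; apply: nesym.
Qed.

Lemma bidegree_revlex_H2 (m u : 'X_{1..n * n}) :
  bidegree u = bidegree m -> revlex_lt rk u m -> @H2 K n 'X_[m].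
Proof.
move=> eq_bideg [|[_ [v [m_lt_u below_v]]]].
  by rewrite (bidegree_mdeg eq_bideg) ltnn.
case/mxvec_indexP: v m_lt_u below_v => p q m_lt_u below_v.
have row_p : rowsum u p = rowsum m p.
  by case: eq_bideg => /ffunP/(_ p) + _; rewrite !ffunE.
have col_q : colsum u q = colsum m q.
  by case: eq_bideg => _ /ffunP/(_ q); rewrite !ffunE.
have [b /eqP bq u_lt_m_pb] := sum_eq_exists_lt row_p m_lt_u.
have [a /eqP ap u_lt_m_aq] := sum_eq_exists_lt col_q m_lt_u.
have rank_ge w : (u w < m w)%N -> (rk (x p q) <= rk w)%N.
  by move=> uw; rewrite leqNgt; apply/negP => /below_v eq_w; rewrite eq_w ltnn in uw.
apply: (@ideal_genX_le _ _ _ (U_(x p b) + U_(x a q))%MM).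
  apply: mnm_le_U2; last exact: leq_ltn_trans u_lt_m_aq.
    by rewrite mxvec_index_eq negb_and; apply/orP; left; apply/eqP/nesym.
  exact: leq_ltn_trans u_lt_m_pb.
by rewrite -genvarM; apply: Hgens_exchange => //; apply: rank_ge.
Qed.

Lemma lead_mon_I2_H2 (f : {mpoly K[n * n]}) m :
  I2 f -> is_lead_mon rk f m -> @H2 K n 'X_[m].
Proof.
move=> If [f_m lead_m].
have [/hasP[u f_u /andP[um /eqP eq_bideg]]|no_u] :=
  boolP (has (fun u => (u != m) && (bidegree u == bidegree m)) (msupp f)).
  exact: bidegree_revlex_H2 eq_bideg (lead_m u f_u um).
move: (coef_sum_I2 (bidegree m) If); rewrite /coef_sum big_mkcond /=.
rewrite (bigD1_seq m) ?msupp_uniq //= eqxx big1_seq ?addr0 => [/eqP|u /andP[um f_u]].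
  by rewrite mcoeff_eq0 f_m.
case: eqP => // eq_bideg; case/negP: no_u; apply/hasP; exists u => //.
by rewrite um eq_bideg eqxx.
Qed.

End Minors.

Theorem proposition4p1 (K : fieldType) (n : nat) (hn : (2 <= n)%N)
    (rk : 'I_(n * n) -> nat) (rk_inj : injective rk)
    (hdiag : forall i i' : 'I_n, (i < i')%N -> (vrank rk i i < vrank rk i' i')%N)
    (hdiag_off : forall i a b : 'I_n, a <> b -> (vrank rk i i < vrank rk a b)%N)
    (hoff : forall i j h k : 'I_n, i <> j -> h <> k ->
              (idist i j < idist h k)%N -> (vrank rk h k < vrank rk i j)%N) :
  forall p : {mpoly K[n * n]},
    initial_ideal rk (@I2 K n) p <-> @H2 K n p.
Proof.
move=> p; split.
  apply: ideal_gen_trans => _ [f [m [If lead_m ->]]].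
  exact: (lead_mon_I2_H2 hdiag_off hoff If lead_m).
apply: ideal_gen_mono => g; exact: Hgens_initial hdiag hdiag_off hoff g.
Qed.
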